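(* Let $x=(x_1,\dots,x_n)$ and $y=(y_1,\dots,y_n)$ be vectors with nonnegative real entries, and assume $y$ is not a permutation of $x$ (i.e., the multisets $\{x_1,\dots,x_n\}$ and $\{y_1,\dots,y_n\}$ differ). Write $\tilde z=(1+z_1,\dots,1+z_n)$ for a vector $z$. If $x\prec_{\log} y$, then $\tilde x\prec_{\mathrm{wlog}}\tilde y$ but $\tilde x\not\prec_{\log}\tilde y$. Consequently, $$\prod_{k=1}^n(1+x_k)<\prod_{k=1}^n(1+y_k).$$ *)

From HB Require Import structures.
From mathcomp Require Import all_boot all_order all_algebra.
Set Implicit Arguments. Unset Strict Implicit. Unset Printing Implicit Defensive.
Import Order.TTheory GRing.Theory Num.Theory.
Local Open Scope ring_scope.

Definition entries (R : realFieldType) (n : nat) (x : 'I_n -> R) : seq R :=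
  [seq x i | i <- enum 'I_n].

Definition decr (R : realFieldType) (n : nat) (x : 'I_n -> R) : seq R :=
  sort (fun a b => b <= a) (entries x).

Definition topprod (R : realFieldType) (n : nat) (x : 'I_n -> R) (k : nat) : R :=
  \prod_(i < k) nth 0 (decr x) i.

Definition wlogmaj (R : realFieldType) (n : nat) (x y : 'I_n -> R) : Prop :=
  forall k : nat, (1 <= k <= n)%N -> topprod x k <= topprod y k.

Definition logmaj (R : realFieldType) (n : nat) (x y : 'I_n -> R) : Prop :=
  wlogmaj x y /\ topprod x n = topprod y n.

Definition tilde (R : realFieldType) (n : nat) (z : 'I_n -> R) : 'I_n -> R :=
  fun i => 1 + z i.

From HB Require Import structures.
From mathcomp Require Import all_boot all_order all_algebra.
From mathcomp Require Import ring.

Set Implicit Arguments.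
Unset Strict Implicit.
Unset Printing Implicit Defensive.
Import Order.TTheory GRing.Theory Num.Theory.
Local Open Scope ring_scope.

(* Write a for the decreasing rearrangement of the nonnegative vector x and b
   for that of y.  The claim reduces to: if the prefix products of a are
   dominated by those of b, then prod (1 + a_i) <= prod (1 + b_i), with
   equality only when b is a permutation of a.  This is proved by induction
   on the length, after checking a_1 <= b_1.  If a_1 = 0 or every later b_j
   exceeds a_1, then a <= b entrywise.  Otherwise let b_j <= a_1 be the first such entry;
   replace b_1 by a_1 and b_j by b_1 b_j / a_1.  The products of the new tail
   still dominate the tail of a (this is the reason for the choice b_1 b_j / a_1),
   and the exchange can only decrease the product of the (1 + b_i), since
   (1 + b_1)(1 + b_j) - (1 + a_1)(1 + b_1 b_j / a_1) = (b_1 - a_1)(a_1 - b_j) / a_1. *)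

Lemma all_take (T : Type) (P : pred T) (s : seq T) (m : nat) :
  all P s -> all P (take m s).
Proof. by rewrite -{1}(cat_take_drop m s) all_cat => /andP[]. Qed.

Lemma perm_swap_cons (T : eqType) (a b : T) (s1 s2 : seq T) :
  perm_eq (a :: s1 ++ b :: s2) (b :: s1 ++ a :: s2).
Proof.
apply/permP => p; rewrite /= !count_cat /=.
by rewrite !(addnCA (count p s1)) [(p a + _)%N]addnCA.
Qed.

Section PrefixProducts.
Variable R : realFieldType.
Implicit Types (a b c d : R) (s u v : seq R).

Definition prefix_prod_le u v :=
  forall m, (m <= size u)%N -> \prod_(x <- take m u) x <= \prod_(x <- take m v) x.

Lemma first_le_split a s :
  all (> a) s \/ exists s1 c s2, [/\ s = s1 ++ c :: s2, all (> a) s1 & c <= a].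
Proof.
elim: s => [|c s IH]; first by left.
have [c_le_a | a_lt_c] := leP c a; first by right; exists [::], c, s.
case: IH => [s_gt | [s1 [d [s2 [-> s1_gt d_le]]]]]; first by left; rewrite /= a_lt_c.
by right; exists (c :: s1), d, s2; rewrite /= a_lt_c.
Qed.

Lemma prod1_ge1 s : all (>= 0) s -> 1 <= \prod_(x <- s) (1 + x).
Proof.
move=> s_ge0; rewrite big_seq; apply: (big_ind (fun x => 1 <= x)) => //.
  exact: mulr_ege1.
by move=> x /(allP s_ge0) x_ge0; rewrite lerDl.
Qed.

Lemma all2_le_of_separated c u v :
  size u = size v -> all (<= c) u -> all (>= c) v -> all2 <=%R u v.
Proof.
elim: u v => [|x u IH] [|y v] //= [size_uv] /andP[x_le u_le] /andP[y_ge v_ge].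
by rewrite (le_trans x_le y_ge) IH.
Qed.

Lemma prod_le_all2 u v :
  all (>= 0) u -> all2 <=%R u v -> \prod_(x <- u) x <= \prod_(y <- v) y.
Proof.
elim: u v => [|x u IH] [|y v] //= /andP[x_ge0 u_ge0] /andP[x_le_y uv].
rewrite !big_cons ler_pM ?IH //.
by rewrite big_seq prodr_ge0 // => z /(allP u_ge0).
Qed.

Lemma prod1_leif_all2 u v : all (>= 0) u -> all2 <=%R u v ->
  \prod_(x <- u) (1 + x) <= \prod_(y <- v) (1 + y) ?= iff (u == v).
Proof.
elim: u v => [|x u IH] [|y v] //=; first by rewrite !big_nil => _ _; apply/leif_refl.
move=> /andP[x_ge0 u_ge0] /andP[x_le_y uv].
rewrite !big_cons eqseq_cons.
have u1_ge1 := prod1_ge1 u_ge0.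
have x1_ge1 : 1 <= 1 + x by rewrite lerDl.
have head_leif : 1 + x <= 1 + y ?= iff (x == y).
  by rewrite (mono_leif (lerD2l 1)); exact: leif_eq.
have prod_leif :=
  leif_pM (le_trans ler01 x1_ge1) (le_trans ler01 u1_ge1) head_leif (IH v u_ge0 uv).
have lhs_gt0 : 0 < (1 + x) * \prod_(z <- u) (1 + z).
  by rewrite mulr_gt0 // (lt_le_trans ltr01).
have rhs_gt0 := lt_le_trans lhs_gt0 (prod_leif).1.
by rewrite (gt_eqF rhs_gt0) in prod_leif.
Qed.

Lemma prod1_leif_perm_eq u v (C : bool) :
  \prod_(x <- u) (1 + x) <= \prod_(y <- v) (1 + y) ?= iff C -> (C -> perm_eq u v) ->
  \prod_(x <- u) (1 + x) <= \prod_(y <- v) (1 + y) ?= iff perm_eq u v.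
Proof.
move=> [le_uv eq_uv] C_perm; split=> //.
apply/idP/idP => [/eqP prod_eq | uv]; last by rewrite (perm_big _ uv).
by apply: C_perm; rewrite -eq_uv prod_eq.
Qed.

Lemma exchange_pair_leif a b c : 0 < a -> a <= b -> c <= a ->
  (1 + a) * (1 + b * c / a) <= (1 + b) * (1 + c) ?= iff (a == b) || (c == a).
Proof.
move=> a_gt0 a_le_b c_le_a.
have gap : (1 + b) * (1 + c) - (1 + a) * (1 + b * c / a) = (b - a) * (a - c) / a.
  by field; rewrite gt_eqF.
split.
  by rewrite -subr_ge0 gap divr_ge0 ?mulr_ge0 ?subr_ge0 // ltW.
rewrite eq_sym -subr_eq0 gap mulf_eq0 invr_eq0 (gt_eqF a_gt0) orbF mulf_eq0.
by rewrite !subr_eq0 [b == a]eq_sym [a == c]eq_sym.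
Qed.

Lemma prod_take_cat_cons s1 c s2 (m : nat) : (size s1 < m)%N ->
  \prod_(x <- take m (s1 ++ c :: s2)) x = c * \prod_(x <- take m.-1 (s1 ++ s2)) x.
Proof.
case: m => // k; rewrite ltnS => s1_le_k.
rewrite !take_cat !ltnNge s1_le_k (leqW s1_le_k) /= subSn //= !big_cat big_cons /=.
exact: mulrCA.
Qed.

Lemma prefix_prod_le_exchange a b c u s1 s2 :
  0 < a -> all (>= 0) u -> all (<= a) u -> all (>= a) s1 ->
  prefix_prod_le (a :: u) (b :: s1 ++ c :: s2) ->
  prefix_prod_le u (s1 ++ b * c / a :: s2).
Proof.
move=> a_gt0 u_ge0 u_le s1_ge pre m m_le.
have [m_le_s1 | s1_lt_m] := leqP m (size s1).
  rewrite takel_cat //; apply: prod_le_all2; first exact: all_take.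
  by apply: (@all2_le_of_separated a); rewrite ?size_takel //; apply: all_take.
rewrite prod_take_cat_cons // -(ler_pM2l a_gt0).
have := pre m.+1 m_le; rewrite /= !big_cons prod_take_cat_cons // => pre_m.
by rewrite mulrA [a * (_ * _)]mulrCA mulfV ?gt_eqF // mulr1 -mulrA.
Qed.

Lemma prod1_leif_exchange a b c u s1 s2 :
  0 < a -> a <= b -> c <= a -> all (>= 0) (s1 ++ s2) ->
  \prod_(x <- u) (1 + x) <= \prod_(y <- s1 ++ b * c / a :: s2) (1 + y)
    ?= iff perm_eq u (s1 ++ b * c / a :: s2) ->
  \prod_(x <- a :: u) (1 + x) <= \prod_(y <- b :: s1 ++ c :: s2) (1 + y)
    ?= iff perm_eq (a :: u) (b :: s1 ++ c :: s2).
Proof.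
move=> a_gt0 a_le_b c_le_a s_ge0; set d := b * c / a.
have pull e : \prod_(y <- s1 ++ e :: s2) (1 + y) = (1 + e) * \prod_(y <- s1 ++ s2) (1 + y).
  by rewrite (perm_big _ (permEl (perm_catCA s1 [:: e] s2))) big_cons.
set W := \prod_(y <- s1 ++ s2) (1 + y).
have W_gt0 : 0 < W by rewrite (lt_le_trans ltr01) // prod1_ge1.
rewrite pull => tail_leif.
apply: (@prod1_leif_perm_eq _ _ (perm_eq u (s1 ++ d :: s2) && ((a == b) || (c == a)))).
  rewrite !big_cons pull mulrA.
  apply: leif_trans (_ : _ <= (1 + a) * (1 + d) * W ?= iff _) _.
    by rewrite -mulrA (mono_leif (ler_pM2l _)) // ltr_wpDr // ltW.
  by rewrite (mono_leif (ler_pM2r W_gt0)); apply: exchange_pair_leif.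
have a_neq0 : a != 0 by rewrite gt_eqF.
move=> /andP[perm_ud /orP[/eqP a_eq_b | /eqP c_eq_a]].
  have d_eq_c : d = c by rewrite /d -a_eq_b [a * c]mulrC mulfK.
  by rewrite -a_eq_b perm_cons -d_eq_c.
have d_eq_b : d = b by rewrite /d c_eq_a mulfK.
rewrite d_eq_b in perm_ud; rewrite c_eq_a.
by apply: perm_trans (perm_swap_cons _ _ _ _); rewrite perm_cons.
Qed.

(* Only u needs to be sorted: the exchange step does not keep v sorted. *)
Lemma prod1_leif_of_prefix_prod_le u v :
  size u = size v -> sorted >=%R u -> all (>= 0) u -> all (>= 0) v ->
  prefix_prod_le u v ->
  \prod_(x <- u) (1 + x) <= \prod_(y <- v) (1 + y) ?= iff perm_eq u v.
Proof.
elim: u v => [|a u IH] [|b v] //=; first by rewrite !big_nil => *; apply/leif_refl.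
move=> [size_uv] sorted_au /andP[a_ge0 u_ge0] /andP[b_ge0 v_ge0] pre.
have u_le_a : all (<= a) u := order_path_min ge_trans sorted_au.
have a_le_b : a <= b by have := pre 1%N isT; rewrite /= !take0 !big_seq1.
have [a0 | a_neq0] := eqVneq a 0.
  subst a; apply: prod1_leif_perm_eq (prod1_leif_all2 _ _) _ => [||/eqP-> //].
  - by rewrite /= lexx.
  - by apply: (@all2_le_of_separated 0); rewrite /= ?size_uv ?lexx ?b_ge0.
have a_gt0 : 0 < a by rewrite lt_def a_neq0.
have [v_gt | [s1 [c [s2 [v_eq s1_gt c_le]]]]] := first_le_split a v.
  apply: prod1_leif_perm_eq (prod1_leif_all2 _ _) _ => [||/eqP-> //].
  - by rewrite /= a_ge0.
  rewrite /= a_le_b /=; apply: (all2_le_of_separated size_uv u_le_a).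
  by apply/allP => y /(allP v_gt)/ltW.
subst v; move: v_ge0; rewrite all_cat /= => /and3P[s1_ge0 c_ge0 s2_ge0].
have s1_ge_a : all (>= a) s1 by apply/allP => y /(allP s1_gt)/ltW.
apply: prod1_leif_exchange => //; first by rewrite all_cat s1_ge0.
apply: IH (path_sorted sorted_au) u_ge0 _ (prefix_prod_le_exchange a_gt0 u_ge0 u_le_a s1_ge_a pre).
  by rewrite size_uv !size_cat.
by rewrite all_cat /= s1_ge0 s2_ge0 divr_ge0 ?mulr_ge0 // ltW.
Qed.
End PrefixProducts.

Section DecreasingRearrangement.
Variables (R : realFieldType) (n : nat).
Implicit Types (x y z : 'I_n -> R).

Lemma size_decr z : size (decr z) = n.
Proof. by rewrite size_sort size_map size_enum_ord. Qed.

Lemma perm_decr z : perm_eq (decr z) (entries z).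
Proof. by rewrite perm_sort. Qed.

Lemma sorted_decr z : sorted >=%R (decr z).
Proof. by apply: sort_sorted => a b; exact: le_total. Qed.

Lemma decr_ge0 z : (forall i, 0 <= z i) -> all (>= 0) (decr z).
Proof. by move=> z_ge0; rewrite (perm_all _ (perm_decr z)); apply/allP => _ /mapP[i _ ->]. Qed.

Lemma topprodE z k : (k <= n)%N -> topprod z k = \prod_(a <- take k (decr z)) a.
Proof.
move=> k_le_n; rewrite /topprod (big_nth 0) size_takel ?size_decr // big_mkord.
by apply: eq_bigr => i _; rewrite nth_take.
Qed.

Lemma decr_tilde z : decr (tilde z) = map (fun a => 1 + a) (decr z).
Proof.
have shift_mono : {mono (fun a : R => 1 + a) : a b / b <= a} by move=> a b; rewrite lerD2l.
by rewrite /decr /entries (map_sort shift_mono) -map_comp.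
Qed.

Lemma topprod_tilde z k :
  (k <= n)%N -> topprod (tilde z) k = \prod_(a <- take k (decr z)) (1 + a).
Proof. by move=> k_le_n; rewrite topprodE // decr_tilde -map_take big_map. Qed.

Lemma prod_tilde z : \prod_(i < n) (1 + z i) = topprod (tilde z) n.
Proof.
rewrite topprod_tilde // take_oversize ?size_decr // (perm_big _ (perm_decr z)).
by rewrite big_map big_enum.
Qed.

Lemma wlogmaj_prefix_prod_le x y k : wlogmaj x y -> (k <= n)%N ->
  prefix_prod_le (take k (decr x)) (take k (decr y)).
Proof.
move=> xy k_le_n m; rewrite size_takel ?size_decr // => m_le_k.
rewrite !take_takel //; case: m m_le_k => [|m] m_le_k; first by rewrite !take0 !big_nil.
have m_le_n := leq_trans m_le_k k_le_n.
by rewrite -!topprodE //; apply: xy; rewrite m_le_n.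
Qed.

End DecreasingRearrangement.

Theorem lemma4 (R : realFieldType) (n : nat) (x y : 'I_n -> R)
  (hx : forall i, 0 <= x i) (hy : forall i, 0 <= y i)
  (hperm : ~~ perm_eq (entries x) (entries y))
  (hlog : logmaj x y) :
  wlogmaj (tilde x) (tilde y) /\ ~ logmaj (tilde x) (tilde y) /\
  \prod_(k < n) (1 + x k) < \prod_(k < n) (1 + y k).
Proof.
have tilde_leif k : (k <= n)%N ->
    topprod (tilde x) k <= topprod (tilde y) k
      ?= iff perm_eq (take k (decr x)) (take k (decr y)).
  move=> k_le_n; rewrite !topprod_tilde //.
  apply: prod1_leif_of_prefix_prod_le (wlogmaj_prefix_prod_le hlog.1 k_le_n).
  - by rewrite !size_takel ?size_decr.
  - exact/take_sorted/sorted_decr.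
  - exact/all_take/decr_ge0.
  - exact/all_take/decr_ge0.
have tilde_lt : topprod (tilde x) n < topprod (tilde y) n.
  rewrite (lt_leif (tilde_leif n (leqnn n))) !take_oversize ?size_decr //.
  apply: contra hperm => perm_xy.
  by apply: perm_trans (perm_trans perm_xy (perm_decr y)); rewrite perm_sym perm_decr.
rewrite !prod_tilde; split=> [k /andP[_ k_le_n] | ]; first exact: tilde_leif.
by split=> // -[_ prod_eq]; move: tilde_lt; rewrite prod_eq ltxx.
Qed.
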